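(* For any fixed $m$, any fixed $k<m$ and any fixed $\vec p\in(0,1)^m$, $$\Pr_{P\sim(\pi_{\vec p})^n}\big(\mathrm{top}_k(\vec p)\subseteq\mathrm{CORE}(P)\big)=1-\exp(-\Omega(n)).$$
   Context: $\mathcal A=[m]$, $\mathcal A_k$ the $k$-subsets. Approval profile $P=(A_1,\dots,A_n)$, $A_j\subseteq\mathcal A$, drawn i.i.d. from $\pi_{\vec p}$, where $\Pr_{\pi_{\vec p}}(A)=\prod_{i\in A}p_i\prod_{i\notin A}(1-p_i)$. $\mathrm{top}_k(\vec p)$ is the set of $W\in\mathcal A_k$ with $p_i\ge p_j$ for all $i\in W$, $j\notin W$. $W\in\mathcal A_k$ is in $\mathrm{CORE}(P)$ iff for every nonempty set of voters $N'\subseteq[n]$ and every $W'\subseteq\mathcal A$ with $|W'|/k\le|N'|/n$ there is $j\in N'$ with $|A_j\cap W'|\le|A_j\cap W|$. Asymptotics as $n\to\infty$. *)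

From HB Require Import structures.
From mathcomp Require Import all_boot all_order all_algebra.
From mathcomp Require Import reals.
From mathcomp Require Import sequences exp.
Set Implicit Arguments. Unset Strict Implicit. Unset Printing Implicit Defensive.
Import Order.TTheory GRing.Theory Num.Theory.
Local Open Scope ring_scope.

(* Alternatives are 'I_m; a ballot (approval set) is a {set 'I_m};
   an approval profile of n voters is a {ffun 'I_n -> {set 'I_m}}. *)
Definition profile (n m : nat) := {ffun 'I_n -> {set 'I_m}}.

Definition ballot_prob {R : realType} {m : nat} (p : 'I_m -> R) (A : {set 'I_m}) : R :=
  (\prod_(i in A) p i) * (\prod_(i in ~: A) (1 - p i)).

Definition profile_prob {R : realType} {n m : nat} (p : 'I_m -> R)
  (E : pred (profile n m)) : R :=
  \sum_(P : profile n m | E P) \prod_(j < n) ballot_prob p (P j).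

Definition in_topk {R : realType} {m : nat} (p : 'I_m -> R) (k : nat) (W : {set 'I_m}) : bool :=
  (#|W| == k) && [forall i in W, [forall j in ~: W, p j <= p i]].

(* W in CORE(P): |W| = k and for all nonempty N' and all W' with
   |W'|/k <= |N'|/n (written cross-multiplied as |W'| * n <= |N'| * k),
   some j in N' has |A_j :&: W'| <= |A_j :&: W|. *)
Definition in_core {n m : nat} (k : nat) (P : profile n m) (W : {set 'I_m}) : bool :=
  (#|W| == k) &&
  [forall N' : {set 'I_n}, forall W' : {set 'I_m},
     ((N' != set0) && (#|W'| * n <= #|N'| * k)%N) ==>
     [exists j in N', (#|P j :&: W'| <= #|P j :&: W|)%N]].

Definition topk_in_core {R : realType} {n m : nat} (p : 'I_m -> R) (k : nat)
  (P : profile n m) : bool :=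
  [forall W : {set 'I_m}, in_topk p k W ==> in_core k P W].

From HB Require Import structures.
From mathcomp Require Import all_boot all_order all_algebra.
From mathcomp Require Import reals.
From mathcomp Require Import sequences exp.
From mathcomp Require Import fingroup perm.
From mathcomp Require Import ring lra zify.
Set Implicit Arguments. Unset Strict Implicit. Unset Printing Implicit Defensive.
Import Order.TTheory GRing.Theory Num.Theory.
Local Open Scope ring_scope.

(* If a committee W in top_k(p) is blocked by a coalition N' demanding W', every voter of N'
   approves more members of W' than of W, so at least |W'| n / k voters do.  A single voter does
   so with probability at most |W'| / (k + 1): lowering the approval probabilities on W \ W' and
   raising those on W' \ W to a common value only makes it likelier, and once they are equal,
   W' \ W and b = |W \ W'| / |W' \ W| (rounded down) disjoint blocks of W \ W' of the same size
   are exchangeable; the event forces W' \ W to hold strictly more approved candidates than each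
   block, so it has probability at most 1 / (b + 1).  A Chernoff bound then makes each of the
   finitely many pairs (W, W') blocking with probability exponentially small in n. *)

Lemma sum_subsets_prod (R : comPzSemiRingType) (I : finType) (a b : I -> R) :
  \sum_(A : {set I}) (\prod_(i in A) a i) * (\prod_(i in ~: A) b i)
  = \prod_(i : I) (a i + b i).
Proof.
have -> : \prod_(i : I) (a i + b i) =
          \prod_(i : I) \sum_(c : bool) (if c then a i else b i).
  by apply: eq_bigr => i _; rewrite big_bool /= addrC.
rewrite bigA_distr_bigA /= (reindex (fun f : {ffun I -> bool} => [set i | f i])) /=.
  apply: eq_bigr => f _; rewrite [RHS](bigID (fun i => f i)) /=; congr (_ * _).
    by apply: eq_big => i; rewrite ?inE // => ->.
  by apply: eq_big => i; rewrite ?inE //; case: (f i).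
exists (fun A : {set I} => [ffun i => i \in A]) => [f _ | A _].
  by apply/ffunP => i; rewrite ffunE inE.
by apply/setP => i; rewrite inE ffunE.
Qed.

Lemma sum_indicator_le1 (R : numDomainType) (I : finType) (P : pred I) :
  (forall x y, P x -> P y -> x = y) -> \sum_(x : I) ((P x)%:R : R) <= 1.
Proof.
move=> Puniq; case: (pickP P) => [x0 Px0 | P0]; last by rewrite big1 // => x _; rewrite P0.
rewrite (bigD1 x0) //= Px0 big1 ?addr0 // => x xx0.
by case Px: (P x) => //; move: xx0; rewrite (Puniq _ _ Px Px0) eqxx.
Qed.

Section BallotProb.
Variables (R : realType) (m : nat).
Implicit Types (p : 'I_m -> R) (i j : 'I_m) (A : {set 'I_m}) (E F : pred {set 'I_m}).

Definition is_prob_vec p := forall i, 0 <= p i <= 1.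

Definition event_prob p E := \sum_(A | E A) ballot_prob p A.

Lemma ballot_prob_ge0 p A : is_prob_vec p -> 0 <= ballot_prob p A.
Proof.
move=> p01; apply: mulr_ge0; apply: prodr_ge0 => i _; have /andP[pi0 pi1] := p01 i => //.
by rewrite subr_ge0.
Qed.

Lemma sum_ballot_prob p : \sum_A ballot_prob p A = 1.
Proof. by rewrite sum_subsets_prod big1 // => i _; rewrite subrKC. Qed.

Lemma event_prob_ge0 p E : is_prob_vec p -> 0 <= event_prob p E.
Proof. by move=> p01; apply: sumr_ge0 => A _; apply: ballot_prob_ge0. Qed.

Lemma event_probE p E : event_prob p E = \sum_A ballot_prob p A * (E A)%:R.
Proof.
by rewrite /event_prob big_mkcond; apply: eq_bigr => A _; case: (E A); rewrite ?mulr1 ?mulr0.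
Qed.

Lemma eq_event_prob p1 p2 E : p1 =1 p2 -> event_prob p1 E = event_prob p2 E.
Proof.
by move=> eq_p; apply: eq_bigr => A _; congr (_ * _); apply: eq_bigr => i _; rewrite eq_p.
Qed.

Lemma subset_event_prob p E F : is_prob_vec p -> subpred E F ->
  event_prob p E <= event_prob p F.
Proof.
move=> p01 EF; rewrite !event_probE; apply: ler_sum => A _.
apply: ler_wpM2l; first exact: ballot_prob_ge0.
by case EA: (E A); rewrite ?(EF _ EA) ?ler0n.
Qed.

Lemma sum_event_prob_disjoint (I : finType) p (E : I -> pred {set 'I_m}) :
  is_prob_vec p -> (forall A a b, E a A -> E b A -> a = b) ->
  \sum_(a : I) event_prob p (E a) <= 1.
Proof.
move=> p01 Euniq; rewrite -(sum_ballot_prob p).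
rewrite (eq_bigr (fun a => \sum_A ballot_prob p A * (E a A)%:R)); last first.
  by move=> a _; rewrite event_probE.
rewrite exchange_big /=; apply: ler_sum => A _.
rewrite -mulr_sumr ler_piMr //; first exact: ballot_prob_ge0.
exact: (@sum_indicator_le1 _ _ (fun a => E a A) (Euniq A)).
Qed.

Definition ballot_prob_off p i A :=
  \prod_(j in A) p j * \prod_(j in ~: A | j != i) (1 - p j).

Lemma sum_ballot_prob_split p i (g : {set 'I_m} -> R) :
  \sum_A ballot_prob p A * g A =
  \sum_(A : {set 'I_m} | i \notin A)
    ballot_prob_off p i A * ((1 - p i) * g A + p i * g (i |: A)).
Proof.
rewrite (bigID (fun A => i \in A)) /=.
rewrite (reindex_onto (fun B => i |: B) (fun A => A :\ i)) /=; last first.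
  by move=> A iA; rewrite setD1K.
rewrite [X in X + _](eq_bigl (fun A => i \notin A)); last first.
  move=> B; rewrite setU11 /=; apply/eqP/idP => [<- | iB]; first by rewrite setD11.
  by rewrite setU1K.
rewrite addrC -big_split /=; apply: eq_bigr => A iA.
have -> : ballot_prob p A = (1 - p i) * ballot_prob_off p i A.
  by rewrite /ballot_prob /ballot_prob_off [\prod_(j in ~: A) _](bigD1 i) ?inE //= mulrCA.
have -> : ballot_prob p (i |: A) = p i * ballot_prob_off p i A.
  rewrite /ballot_prob /ballot_prob_off big_setU1 //= -mulrA; congr (_ * (_ * _)).
  by apply: eq_bigl => j; rewrite !inE negb_or andbC.
ring.
Qed.

Lemma ballot_prob_off_ge0 p i A : is_prob_vec p -> 0 <= ballot_prob_off p i A.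
Proof.
move=> p01; apply: mulr_ge0; apply: prodr_ge0 => j _; have /andP[pj0 pj1] := p01 j => //.
by rewrite subr_ge0.
Qed.

Lemma eq_ballot_prob_off p1 p2 i A : {in predC1 i, p1 =1 p2} -> i \notin A ->
  ballot_prob_off p1 i A = ballot_prob_off p2 i A.
Proof.
move=> eq_p iA; rewrite /ballot_prob_off; congr (_ * _).
  by apply: eq_bigr => j jA; apply: eq_p; apply: contraNneq iA => <-.
by apply: eq_bigr => j /andP[_ ji]; rewrite eq_p.
Qed.

(* Moving p i towards the side on which E grows with i can only increase Pr(E). *)
Lemma event_prob_le_update p1 p2 i E : is_prob_vec p1 -> {in predC1 i, p1 =1 p2} ->
  (forall A, i \notin A -> (p1 i - p2 i) * ((E (i |: A))%:R - (E A)%:R) <= 0) ->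
  event_prob p1 E <= event_prob p2 E.
Proof.
move=> p01 eq_p Emono; rewrite !event_probE !(sum_ballot_prob_split _ i).
apply: ler_sum => A iA; rewrite -(eq_ballot_prob_off eq_p iA).
apply: ler_wpM2l; first exact: ballot_prob_off_ge0.
have := Emono A iA; lra.
Qed.

Definition set_probs p (s : seq 'I_m) (x : R) j := if j \in s then x else p j.

Lemma set_probs_prob_vec p s x :
  is_prob_vec p -> 0 <= x <= 1 -> is_prob_vec (set_probs p s x).
Proof. by move=> p01 x01 j; rewrite /set_probs; case: ifP. Qed.

Lemma event_prob_le_set_probs p s x E : is_prob_vec p -> 0 <= x <= 1 ->
  (forall j, j \in s -> forall A, j \notin A ->
     (p j - x) * ((E (j |: A))%:R - (E A)%:R) <= 0) ->
  event_prob p E <= event_prob (set_probs p s x) E.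
Proof.
move=> p01 x01; elim: s => [|j s IHs] Emono.
  by rewrite (@eq_event_prob _ (set_probs p [::] x)).
apply: le_trans (IHs _) _ => [i i_s|]; first by apply: Emono; rewrite inE i_s orbT.
apply: (event_prob_le_update (i := j)); first exact: set_probs_prob_vec.
  by move=> i /= ij; rewrite /set_probs inE (negbTE ij).
move=> A jA; rewrite /set_probs inE eqxx /=; case: ifP => _; first by rewrite subrr mul0r.
by apply: Emono; rewrite ?inE ?eqxx.
Qed.

End BallotProb.

Section Exchangeability.
Variables (R : realType) (m : nat).
Implicit Types (p : 'I_m -> R) (A : {set 'I_m}) (E : pred {set 'I_m}).

Lemma ballot_prob_preimset p (s : 'I_m -> 'I_m) A : injective s ->
  (forall i, p (s i) = p i) -> ballot_prob p (s @^-1: A) = ballot_prob p A.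
Proof.
move=> s_inj ps; rewrite /ballot_prob; congr (_ * _);
  by rewrite [RHS](reindex_inj s_inj); apply: eq_big => i; rewrite ?inE ?ps.
Qed.

Lemma event_prob_preimset p (s : 'I_m -> 'I_m) E : involutive s ->
  (forall i, p (s i) = p i) -> event_prob p (fun A => E (s @^-1: A)) = event_prob p E.
Proof.
move=> sK ps; pose pre A := s @^-1: A.
have preK : involutive pre.
  by move=> A; apply/setP => i; rewrite !inE sK.
rewrite /event_prob [RHS](reindex_inj (inv_inj preK)) /=; apply: eq_bigr => A _.
by rewrite (ballot_prob_preimset _ (inv_inj sK) ps).
Qed.

End Exchangeability.

Section Blocks.
Variables (R : realType) (m b r : nat) (e : 'I_b.+1 * 'I_r -> 'I_m).
Hypothesis e_inj : injective e.
Implicit Types (a c d : 'I_b.+1) (A : {set 'I_m}).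

Definition block_count c A := #|[set i | e (c, i) \in A]|.

Definition block_wins c A :=
  [forall d, (d != c) ==> (block_count d A < block_count c A)%N].

Lemma block_countE c A : block_count c A = #|A :&: [set e (c, i) | i : 'I_r]|.
Proof.
have ec_inj : injective (fun i => e (c, i)) by move=> i j /e_inj [].
rewrite /block_count -(card_imset _ ec_inj); apply: eq_card => x; rewrite inE.
apply/imsetP/andP => [[i] | [xA /imsetP [i _ ex]]].
  by rewrite inE => eiA ->; split=> //; apply: imset_f.
by exists i; rewrite // inE -ex.
Qed.

Lemma block_wins_uniq A c d : block_wins c A -> block_wins d A -> c = d.
Proof.
move=> /forallP/(_ d)/implyP cw /forallP/(_ c)/implyP dw; apply/eqP; apply: contraT => cd.
by have := ltn_trans (cw _) (dw _); rewrite ltnn; apply; rewrite // eq_sym.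
Qed.

Definition swap_blocks a (x : 'I_m) : 'I_m :=
  if [pick y | e y == x] is Some y then e (tperm ord0 a y.1, y.2) else x.

Lemma swap_blocks_e a y : swap_blocks a (e y) = e (tperm ord0 a y.1, y.2).
Proof.
by rewrite /swap_blocks; case: pickP => [y' /eqP/e_inj -> // | /(_ y)]; rewrite eqxx.
Qed.

Lemma swap_blocks_out a x : (forall y, e y != x) -> swap_blocks a x = x.
Proof. by move=> ex; rewrite /swap_blocks; case: pickP => // y; rewrite (negbTE (ex y)). Qed.

Lemma swap_blocksK a : involutive (swap_blocks a).
Proof.
move=> x; case: (pickP (fun y => e y == x)) => [[c i] /eqP <- | ex].
  by rewrite !swap_blocks_e /= tpermK.
by rewrite !swap_blocks_out // => y; rewrite ex.
Qed.

Lemma block_wins_swap a A : block_wins ord0 (swap_blocks a @^-1: A) = block_wins a A.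
Proof.
have count_swap c : block_count c (swap_blocks a @^-1: A) = block_count (tperm ord0 a c) A.
  by apply: eq_card => i; rewrite !inE swap_blocks_e.
have swap_eq c d : (tperm ord0 a c == d) = (c == tperm ord0 a d) :=
  canF_eq (tpermK ord0 a) c d.
apply/forallP/forallP => win c; move: (win (tperm ord0 a c)); rewrite !count_swap.
  by rewrite tpermK tpermL swap_eq tpermL.
by rewrite tpermL swap_eq tpermR.
Qed.

Lemma first_block_wins_prob (p : 'I_m -> R) :
  is_prob_vec p -> (forall y y', p (e y) = p (e y')) ->
  b.+1%:R * event_prob p (block_wins ord0) <= 1.
Proof.
move=> p01 pe.
have swap_p a i : p (swap_blocks a i) = p i.
  case: (pickP (fun y => e y == i)) => [y /eqP <- | ex].
    by rewrite swap_blocks_e; apply: pe.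
  by rewrite swap_blocks_out // => y; rewrite ex.
have win_prob a : event_prob p (block_wins a) = event_prob p (block_wins ord0).
  rewrite -(event_prob_preimset (block_wins ord0) (swap_blocksK a) (swap_p a)).
  by apply: eq_bigl => A; rewrite block_wins_swap.
have -> : b.+1%:R * event_prob p (block_wins ord0) =
          \sum_(a < b.+1) event_prob p (block_wins a).
  by rewrite (eq_bigr _ (fun a _ => win_prob a)) sumr_const card_ord mulr_natl.
exact: sum_event_prob_disjoint p01 block_wins_uniq.
Qed.

End Blocks.

Lemma exists_block_embedding m b (T U : {set 'I_m}) :
  [disjoint T & U] -> (0 < #|T|)%N -> (b * #|T| <= #|U|)%N ->
  exists e : 'I_b.+1 * 'I_#|T| -> 'I_m, [/\ injective e,
    [set e (ord0, i) | i : 'I_#|T|] = T & forall c i, c != ord0 -> e (c, i) \in U].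
Proof.
move=> dTU T0 bU; set r := #|T| in T0 bU *.
have [x0 _] : exists x0, x0 \in T by apply/set0Pn; rewrite -card_gt0.
pose S := enum T ++ enum U.
have sizeT : size (enum T) = r by rewrite -cardE.
have uniqS : uniq S.
  rewrite cat_uniq !enum_uniq /= andbT; apply/hasPn => x; rewrite !mem_enum => xU.
  by rewrite (disjointFl dTU xU).
have ltS (c : 'I_b.+1) (i : 'I_r) : (c * r + i < size S)%N.
  rewrite size_cat sizeT -cardE; have := ltn_ord c; have := ltn_ord i; nia.
exists (fun y : 'I_b.+1 * 'I_r => nth x0 S (y.1 * r + y.2)); split.
- move=> [c i] [d j] /= /eqP; rewrite nth_uniq // => /eqP cidj.
  have cd : c = d :> nat.
    by move: (congr1 (divn^~ r) cidj); rewrite /= !divnMDl // !divn_small // !addn0.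
  have ij : i = j :> nat by move: (congr1 (modn^~ r) cidj); rewrite /= !modnMDl !modn_small.
  by rewrite (val_inj cd) (val_inj ij).
- apply/setP => x; rewrite /= mul0n; apply/imsetP/idP => [[i _ ->] | xT].
    by rewrite add0n nth_cat sizeT ltn_ord -mem_enum mem_nth // sizeT.
  have ix : (index x (enum T) < r)%N by rewrite -sizeT index_mem mem_enum.
  by exists (Ordinal ix); rewrite // add0n nth_cat sizeT ix nth_index // mem_enum.
- move=> c i c0 /=; have ltcr : (r <= c * r)%N by rewrite leq_pmull // lt0n.
  rewrite nth_cat sizeT ltnNge (leq_trans ltcr (leq_addr _ _)) /= -mem_enum mem_nth //.
  have ltcb : (c * r <= b * r)%N by rewrite leq_mul2r -ltnS ltn_ord orbT.
  rewrite -cardE; apply: leq_trans (leq_trans ltcb bU); have := ltn_ord i; lia.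
Qed.

Section Preference.
Variables (R : realType) (m : nat).
Implicit Types (p : 'I_m -> R) (j : 'I_m) (A W X : {set 'I_m}).

Definition prefers W (W' : {set 'I_m}) : pred {set 'I_m} :=
  fun A => (#|A :&: W| < #|A :&: W'|)%N.

Lemma prefersE W (W' : {set 'I_m}) A :
  prefers W W' A = (#|A :&: (W :\: W')| < #|A :&: (W' :\: W)|)%N.
Proof.
rewrite /prefers -(cardsID W' (A :&: W)) -(cardsID W (A :&: W')) -!setIDA.
by rewrite -!setIA [W' :&: W]setIC ltn_add2l.
Qed.

Lemma card_setU1I j A X : j \notin A -> #|(j |: A) :&: X| = ((j \in X) + #|A :&: X|)%N.
Proof.
move=> jA; case jX: (j \in X).
  have -> : (j |: A) :&: X = j |: (A :&: X).
    by apply/setP => x; rewrite !inE; case: eqP => [->|]; rewrite ?jX ?andbT.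
  by rewrite cardsU1 inE (negbTE jA).
rewrite add0n; apply: eq_card => x; rewrite !inE.
by case: eqP => [->|]; rewrite ?jX ?(negbTE jA).
Qed.

Lemma prefers_prob_le_flatten p W (W' : {set 'I_m}) x :
  is_prob_vec p -> 0 <= x <= 1 ->
  {in W :\: W', forall j, x <= p j} -> {in W' :\: W, forall j, p j <= x} ->
  event_prob p (prefers W W') <= event_prob (set_probs p (enum (W :|: W')) x) (prefers W W').
Proof.
move=> p01 x01 geW leW'; apply: event_prob_le_set_probs => // j.
rewrite mem_enum => jWW' A jA.
rewrite /prefers !card_setU1I //.
case jW: (j \in W); case jW': (j \in W'); rewrite ?add1n ?add0n ?ltnS.
- by rewrite subrr mulr0.
- apply: mulr_ge0_le0; first by rewrite subr_ge0 geW // inE jW jW'.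
  by rewrite subr_le0 ler_nat; case: ltnP => // /ltnW ->.
- apply: mulr_le0_ge0; first by rewrite subr_le0 leW' // inE jW jW'.
  by rewrite subr_ge0 ler_nat; case: ltnP => // /ltnW ->.
- by move: jWW'; rewrite inE jW jW'.
Qed.

Lemma prefers_prob_le_blocks p W (W' : {set 'I_m}) x :
  is_prob_vec p -> {in W :|: W', forall j, p j = x} -> (0 < #|W' :\: W|)%N ->
  (#|W :\: W'| %/ #|W' :\: W|).+1%:R * event_prob p (prefers W W') <= 1.
Proof.
move=> p01 px T_gt0; set T := W' :\: W in T_gt0 *; set U := W :\: W'.
have dTU : [disjoint T & U].
  rewrite -setI_eq0; apply/eqP/setP => y; rewrite !inE.
  by case: (y \in W); rewrite ?andbF.
have [e [e_inj eT eU]] := exists_block_embedding dTU T_gt0 (leq_divM #|U| #|T|).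
have pe y : p (e y) = x.
  case: y => c i; apply: px; case: (eqVneq c ord0) => [-> | c0].
    have : e (ord0, i) \in [set e (ord0, j) | j : 'I_#|T|] by apply: imset_f.
    by rewrite eT !inE => /andP[_ ->]; rewrite orbT.
  by have := eU c i c0; rewrite !inE => /andP[_ ->].
have pe_const y y' : p (e y) = p (e y') by rewrite !pe.
apply: le_trans (first_block_wins_prob e_inj p01 pe_const).
apply: ler_wpM2l; first exact: ler0n.
apply: subset_event_prob => // A; rewrite prefersE => lt.
apply/forallP => c; apply/implyP => c0; rewrite !(block_countE e_inj) eT.
apply: leq_ltn_trans lt; apply: subset_leq_card; apply: setIS.
by apply/subsetP => _ /imsetP [i _ ->]; apply: eU.
Qed.

(* The gap between this bound and the proportional share |W'| / k is what the Chernoff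
   bound exploits. *)
Lemma prefers_prob_le p k W (W' : {set 'I_m}) : is_prob_vec p -> in_topk p k W ->
  (0 < #|W'| <= k)%N -> event_prob p (prefers W W') * k.+1%:R <= #|W'|%:R.
Proof.
move=> p01 /andP[/eqP cardW /forallP top] /andP[W'_gt0 W'k].
have [T0 | T_gt0] := posnP #|W' :\: W|.
  rewrite /event_prob big_pred0 ?mul0r ?ler0n // => A.
  by rewrite prefersE (cards0_eq T0) setI0 cards0.
have [w1 w1W] : exists w, w \in W.
  by apply/set0Pn; rewrite -card_gt0 cardW (leq_trans W'_gt0).
have [w0 w0W minw0] := @arg_minP _ _ _ w1 (fun w => w \in W) p w1W.
set p2 := set_probs p (enum (W :|: W')) (p w0).
have le_p2 : event_prob p (prefers W W') <= event_prob p2 (prefers W W').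
  apply: prefers_prob_le_flatten => // j; rewrite inE => /andP[jNW jW]; first exact: minw0.
  by have /implyP/(_ w0W)/forallP/(_ j)/implyP := top w0; apply; rewrite inE.
have p2_vec : is_prob_vec p2 by apply: set_probs_prob_vec.
have p2_eq : {in W :|: W', forall j, p2 j = p w0}.
  by move=> j jWW'; rewrite /p2 /set_probs mem_enum jWW'.
have p2_le := prefers_prob_le_blocks p2_vec p2_eq T_gt0.
set s := #|W :\: W'| in p2_le; set r := #|W' :\: W| in T_gt0 p2_le.
set b := (s %/ r)%N in p2_le.
have cardk : (#|W :&: W'| + s = k)%N by rewrite -cardW cardsID.
have cardt : (#|W :&: W'| + r = #|W'|)%N by rewrite setIC cardsID.
have ltk : (k.+1 <= #|W'| * b.+1)%N.
  have := ltn_ceil s T_gt0; rewrite -/b -cardk -cardt; nia.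
have q_ge0 : 0 <= event_prob p2 (prefers W W') by exact: event_prob_ge0.
have ltk' : k.+1%:R <= #|W'|%:R * b.+1%:R :> R by rewrite -natrM ler_nat.
have := ler_wpM2l q_ge0 ltk'; have := ler_wpM2r (ler0n R k.+1) le_p2.
have := ler0n R #|W'|; nra.
Qed.

End Preference.

Lemma sum_ffun_prod (R : comPzSemiRingType) (T : finType) n (g : T -> R) :
  \sum_(f : {ffun 'I_n -> T}) \prod_(j < n) g (f j) = (\sum_x g x) ^+ n.
Proof. by rewrite -[in RHS](card_ord n) -prodr_const bigA_distr_bigA. Qed.

Section Profiles.
Variables (R : realType) (m n : nat).
Implicit Types (p : 'I_m -> R) (P : profile n m).

Lemma sum_profile_weight p : \sum_(P : profile n m) \prod_(j < n) ballot_prob p (P j) = 1.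
Proof. by rewrite sum_ffun_prod sum_ballot_prob expr1n. Qed.

Lemma profile_weight_ge0 p P : is_prob_vec p -> 0 <= \prod_(j < n) ballot_prob p (P j).
Proof. by move=> p01; apply: prodr_ge0 => j _; apply: ballot_prob_ge0. Qed.

Lemma union_bound_profile_prob p (E : pred (profile n m))
    (I : finType) (G : I -> pred (profile n m)) :
  is_prob_vec p -> (forall P, ~~ E P -> exists x, G x P) ->
  1 - profile_prob p E <= \sum_x profile_prob p (G x).
Proof.
move=> p01 cover; rewrite -(sum_profile_weight p) (bigID E) /= /profile_prob addrC addrK.
apply: le_trans
  (_ : _ <= \sum_(P : profile n m) \sum_x (G x P)%:R * \prod_(j < n) ballot_prob p (P j)) _.
  rewrite [X in _ <= X](bigID E) /=; apply: ler_wpDl.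
    by apply: sumr_ge0 => P _; apply: sumr_ge0 => x _; rewrite mulr_ge0 ?profile_weight_ge0.
  apply: ler_sum => P /cover [x Gx]; rewrite (bigD1 x) //= Gx mul1r lerDl.
  by apply: sumr_ge0 => y _; rewrite mulr_ge0 ?profile_weight_ge0.
rewrite exchange_big; apply: ler_sum => x _; rewrite /profile_prob [X in _ <= X]big_mkcond.
by apply: ler_sum => P _; case: (G x P); rewrite ?mul1r ?mul0r.
Qed.

(* Markov's inequality for mu ^ (k * #{voters with f}), whose expectation factorises. *)
Lemma chernoff_count p (f : pred {set 'I_m}) (mu : R) (t k : nat) :
  is_prob_vec p -> 1 <= mu ->
  mu ^+ (t * n) * profile_prob p (fun P => (t * n <= k * \sum_(j < n) f (P j))%N)
  <= (1 + event_prob p f * (mu ^+ k - 1)) ^+ n.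
Proof.
move=> p01 mu1.
have mgf : \sum_A ballot_prob p A * (mu ^+ k) ^+ f A = 1 + event_prob p f * (mu ^+ k - 1).
  rewrite (eq_bigr (fun A => ballot_prob p A + ballot_prob p A * (f A)%:R * (mu ^+ k - 1))).
    by rewrite big_split /= sum_ballot_prob -mulr_suml -event_probE.
  by move=> A _; case: (f A); rewrite /= ?expr1 ?expr0; ring.
rewrite -mgf -sum_ffun_prod /profile_prob mulr_sumr.
rewrite [X in _ <= X](bigID (fun P => (t * n <= k * \sum_(j < n) f (P j))%N)) /=.
apply: ler_wpDr.
  apply: sumr_ge0 => P _; apply: prodr_ge0 => j _.
  by rewrite mulr_ge0 ?ballot_prob_ge0 ?exprn_ge0 // (le_trans ler01 mu1).
apply: ler_sum => P tnS; rewrite [X in _ <= X]big_split /= -expr_sum -exprM mulrC.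
by apply: ler_wpM2l; [exact: profile_weight_ge0 | exact: ler_weXn2l].
Qed.

End Profiles.

Section Rates.
Variable R : realType.

Lemma expR_mul1B_le1 (x : R) : expR x * (1 - x) <= 1.
Proof.
by rewrite -[X in _ <= X](expRxMexpNx_1 x) ler_wpM2l ?expR_ge0 ?expR_ge1Dx.
Qed.

(* With eps = 1 / (K (2K + 1)), the moment generating function at K eps exceeds 1
   by at most 1 / (2K), and d = 1 / (2K (K + 1)) < eps absorbs the resulting linear term. *)
Lemma exists_chernoff_rate (K : R) : 1 <= K ->
  exists eps rho : R, [/\ 0 < eps, 0 < rho, rho < 1 &
    forall T q, 1 <= T -> 0 <= q -> q * (K + 1) <= T ->
      1 + q * (expR (K * eps) - 1) <= rho * expR (T * eps)].
Proof.
move=> K1; pose eps := (K * (2 * K + 1))^-1; pose d := (2 * K * (K + 1))^-1.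
have eps_gt0 : 0 < eps by rewrite invr_gt0; nra.
have d_gt0 : 0 < d by rewrite invr_gt0; nra.
have d_lt_eps : d < eps by rewrite ltf_pV2 ?posrE; nra.
have growth : (expR (K * eps) - 1) * (2 * K) <= 1.
  have K_eps : 1 - K * eps = 2 * K / (2 * K + 1) by rewrite /eps; field; lra.
  have := expR_mul1B_le1 (K * eps); rewrite K_eps mulrA ler_pdivrMr; lra.
have d_eq : d * (2 * K * (K + 1)) = 1 by rewrite mulVf //; nra.
exists eps, ((1 + d) / (1 + eps)); split => //.
  by rewrite divr_gt0 //; lra.
  by rewrite ltr_pdivrMr; lra.
move=> T q T1 q0 qK.
have step1 : q * (expR (K * eps) - 1) <= T * d.
  have := ler_wpM2l q0 growth; nra.
have step2 : 1 + T * d <= (1 + d) / (1 + eps) * (1 + T * eps).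
  by rewrite mulrAC ler_pdivlMr; nra.
have step3 : (1 + d) / (1 + eps) * (1 + T * eps) <= (1 + d) / (1 + eps) * expR (T * eps).
  by rewrite ler_wpM2l ?expR_ge1Dx // divr_ge0; lra.
lra.
Qed.

Lemma geometric_le_expR (M rho : R) : 0 < rho -> rho < 1 ->
  exists c : R, 0 < c /\ exists N : nat, forall n : nat, (N <= n)%N ->
    M * rho ^+ n <= expR (- (c * n%:R)).
Proof.
(* Half of the rate - ln rho absorbs the constant M. *)
move=> rho0 rho1; pose c := - ln rho / 2.
have c_gt0 : 0 < c by rewrite divr_gt0 // oppr_gt0 ln_lt0 // rho0.
exists c; split => //; exists (Num.bound (`|M| / c)) => n Nn.
have cn : `|M| <= c * n%:R.
  rewrite mulrC -ler_pdivrMr //; apply: ltW; apply: lt_le_trans (archi_boundP _) _.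
    by rewrite divr_ge0 // ltW.
  by rewrite ler_nat.
set a := expR (- (c * n%:R)).
have rho_n : rho ^+ n = a * a.
  have rho_pos : rho \in Num.pos by rewrite posrE.
  by rewrite -expRD -{1}(lnK rho_pos) -expRM_natr /c; congr expR; field.
have a_ge0 : 0 <= a := expR_ge0 _.
have Ma : M * a <= 1.
  have := expR_ge1Dx (c * n%:R); have := expRxMexpNx_1 (c * n%:R); rewrite -/a.
  have := ler_norm M; nra.
rewrite rho_n; nra.
Qed.

End Rates.

Section BlockingPairs.
Variables (R : realType) (m : nat).
Implicit Types (p : 'I_m -> R).

Lemma count_prob_decay n p (f : pred {set 'I_m}) (t k : nat) (eps rho : R) :
  is_prob_vec p -> 0 <= eps ->
  1 + event_prob p f * (expR (k%:R * eps) - 1) <= rho * expR (t%:R * eps) ->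
  profile_prob p (fun P : profile n m => (t * n <= k * \sum_(j < n) f (P j))%N) <= rho ^+ n.
Proof.
move=> p01 eps0; rewrite !expRM_natl; set mu := expR eps => rate.
have mu1 : 1 <= mu by rewrite /mu; have := expR_ge1Dx eps; lra.
have mgf_ge0 : 0 <= 1 + event_prob p f * (mu ^+ k - 1).
  by rewrite addr_ge0 ?mulr_ge0 ?event_prob_ge0 // subr_ge0 exprn_ege1.
have := le_trans (chernoff_count n f t k p01 mu1)
  (lerXn2r n mgf_ge0 (le_trans mgf_ge0 rate) rate).
by rewrite exprMn -exprM mulrC ler_pM2r // exprn_gt0 // (lt_le_trans ltr01 mu1).
Qed.

Definition blocking_pair n k p (x : {set 'I_m} * {set 'I_m}) : pred (profile n m) :=
  fun P => [&& in_topk p k x.1, (0 < #|x.2| <= k)%N &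
                (#|x.2| * n <= k * \sum_(j < n) prefers x.1 x.2 (P j))%N].

Lemma not_topk_in_core_blocking n k p (P : profile n m) :
  ~~ topk_in_core p k P -> exists x, blocking_pair k p x P.
Proof.
move=> /forallPn [W]; rewrite negb_imply => /andP[Wtop]; move: (Wtop) => /andP[cardW _].
rewrite /in_core cardW => /forallPn [N'] /forallPn [W'].
rewrite negb_imply => /andP[/andP[N'0 small] /existsPn noj].
have prefN' j : j \in N' -> prefers W W' (P j).
  by move=> jN'; move: (noj j); rewrite jN' /= -ltnNge.
have [j0 j0N'] : exists j, j \in N' by apply/set0Pn.
have count : (#|N'| <= \sum_(j < n) prefers W W' (P j))%N.
  rewrite -sum1_card big_mkcond /=; apply: leq_sum => j _.
  by case: ifP => // /prefN' ->.
have N'n : (#|N'| <= n)%N by apply: leq_trans (max_card _) _; rewrite card_ord.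
have n_gt0 : (0 < n)%N := leq_ltn_trans (leq0n j0) (ltn_ord j0).
exists (W, W'); apply/and3P; split => //=; first (apply/andP; split).
- apply: leq_ltn_trans (leq0n _) (leq_trans (prefN' _ j0N') _).
  by rewrite subset_leq_card ?subsetIr.
- by rewrite -(leq_pmul2r n_gt0) (leq_trans small) // mulnC leq_mul2l N'n orbT.
- by rewrite (leq_trans small) // mulnC leq_mul2l count orbT.
Qed.

Lemma blocking_pair_decay k p : is_prob_vec p ->
  exists rho : R, [/\ 0 < rho, rho < 1 &
    forall n x, profile_prob p (@blocking_pair n k p x) <= rho ^+ n].
Proof.
move=> p01; case: k => [|k].
  exists (1 / 2); split => [||n x]; try lra.
  rewrite /profile_prob big_pred0 ?exprn_ge0 //; first lra.
  by move=> P; apply/and3P => -[_ /andP[t_gt0 t_le0] _]; lia.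
have [eps [rho [eps0 rho0 rho1 rate]]] := exists_chernoff_rate (ler1n R k.+1).
exists rho; split => // n [W W'].
have [/andP[Wtop W'k] | degenerate] := boolP (in_topk p k.+1 W && (0 < #|W'| <= k.+1)%N).
  have -> : profile_prob p (@blocking_pair n k.+1 p (W, W')) =
            profile_prob p (fun P : profile n m =>
              (#|W'| * n <= k.+1 * \sum_(j < n) prefers W W' (P j))%N).
    by rewrite /profile_prob; apply: eq_bigl => P; rewrite /blocking_pair /= Wtop W'k.
  apply: (count_prob_decay n (f := prefers W W') p01 (ltW eps0)).
  apply: rate; [by rewrite ler1n; case/andP: W'k | exact: event_prob_ge0 |].
  by rewrite natr1; apply: prefers_prob_le.
rewrite /profile_prob big_pred0 ?exprn_ge0 ?ltW // => P.
by apply/negbTE; apply: contra degenerate => /and3P[/= -> -> _].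
Qed.

End BlockingPairs.

Theorem theorem16 (R : realType) (m k : nat) (p : 'I_m -> R) :
  (k < m)%N -> (forall i, 0 < p i < 1) ->
  exists c : R, 0 < c /\
    exists N : nat, forall n : nat, (N <= n)%N ->
      1 - profile_prob (n := n) p (topk_in_core p k) <= expR (- (c * n%:R)).
Proof.
(* The argument works for every k. *)
move=> _ p_range.
have p01 : is_prob_vec p by move=> i; have /andP[p0 p1] := p_range i; rewrite !ltW.
have [rho [rho0 rho1 decay]] := blocking_pair_decay k p01.
pose M := #|{: {set 'I_m} * {set 'I_m}}|%:R : R.
have [c [c0 [N tail]]] := geometric_le_expR M rho0 rho1.
exists c; split => //; exists N => n Nn; apply: le_trans (tail n Nn).
apply: le_trans (union_bound_profile_prob p01 (@not_topk_in_core_blocking _ _ n k p)) _.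
apply: le_trans (ler_sum _ (fun x _ => decay n x)) _.
by rewrite sumr_const mulr_natl.
Qed.
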